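(* Let $\alpha$ be a unit-speed curve in $\mathbb{R}^3$ with nonvanishing curvature, let $\alpha_T$ be its tangent indicatrix, and let $\beta$ be an evolute-direction curve of $\alpha_T$ (an $X$-direction curve of $\alpha_T$ with $N_\beta=T_T$). Then: (i) $\alpha_T$ is a circle or a part of a circle on the unit sphere if and only if $\beta$ is a helix; (ii) $\alpha_T$ is a spherical helix if and only if $\beta$ is a slant helix.
   Context: Let $\alpha:I\subset\mathbb{R}\to\mathbb{R}^3$ be a unit-speed curve with curvature $\kappa>0$, torsion $\tau$ and Frenet frame $\{T,N,B\}$. The tangent indicatrix of $\alpha$ is the curve $\alpha_T=T$ on the unit sphere. Its arc length is $s_T=\int\kappa\,ds$. Its Frenet apparatus is $\{T_T,N_T,B_T,\kappa_T,\tau_T\}$, with $\frac{dT_T}{ds_T}=\kappa_TN_T$, $\frac{dN_T}{ds_T}=-\kappa_TT_T+\tau_TB_T$ and $\frac{dB_T}{ds_T}=-\tau_TN_T$. Let $x,y,z$ be real functions of $s_T$ with $x^2+y^2+z^2=1$, and set $X=xT_T+yN_T+zB_T$. An integral curve $\beta$ of $X$, meaning $d\beta/ds_T=X$, is an $X$-direction curve of $\alpha_T$. It is regarded as a unit-speed Frenet curve with frame $\{T_\beta=X,N_\beta,B_\beta\}$, curvature $\kappa_\beta>0$ and torsion $\tau_\beta$. $\beta$ is an evolute-direction curve of $\alpha_T$ if $N_\beta=T_T$. A curve with curvature $k>0$ and torsion $t$ is a (general) helix if its unit tangent makes a constant angle with a fixed line; equivalently, $t/k$ is constant. It is a slant helix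 if its principal normal makes a constant angle with a fixed line; equivalently, $\frac{k^2}{(k^2+t^2)^{3/2}}\,(t/k)'$ is constant, where $'$ is the derivative with respect to arc length. A spherical helix is a helix lying on a sphere. *)

From Stdlib Require Import Reals.
From Coquelicot Require Import Coquelicot.
Open Scope R_scope.

Definition V3 : Type := (R * R * R)%type.
Definition vx (v : V3) : R := fst (fst v).
Definition vy (v : V3) : R := snd (fst v).
Definition vz (v : V3) : R := snd v.
Definition vadd (u v : V3) : V3 := (vx u + vx v, vy u + vy v, vz u + vz v).
Definition vsub (u v : V3) : V3 := (vx u - vx v, vy u - vy v, vz u - vz v).
Definition vscale (a : R) (v : V3) : V3 := (a * vx v, a * vy v, a * vz v).
Definition vdot (u v : V3) : R := vx u * vx v + vy u * vy v + vz u * vz v.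
Definition vcross (u v : V3) : V3 :=
  (vy u * vz v - vz u * vy v, vz u * vx v - vx u * vz v, vx u * vy v - vy u * vx v).
Definition vnorm (v : V3) : R := sqrt (vdot v v).

Definition vderiv (f f' : R -> V3) (t : R) : Prop :=
  is_derive (fun s => vx (f s)) t (vx (f' t)) /\
  is_derive (fun s => vy (f s)) t (vy (f' t)) /\
  is_derive (fun s => vz (f s)) t (vz (f' t)).

Definition in_open (a b : Rbar) (t : R) : Prop := Rbar_lt a t /\ Rbar_lt t b.

Definition frenet_curve (a b : Rbar) (c T N B : R -> V3) (k t : R -> R) : Prop :=
  forall s, in_open a b s ->
    vderiv c T s /\
    vderiv T (fun u => vscale (k u) (N u)) s /\
    vderiv N (fun u => vadd (vscale (- k u) (T u)) (vscale (t u) (B u))) s /\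
    vderiv B (fun u => vscale (- t u) (N u)) s /\
    vdot (T s) (T s) = 1 /\ vdot (N s) (N s) = 1 /\ vdot (B s) (B s) = 1 /\
    vdot (T s) (N s) = 0 /\ vdot (T s) (B s) = 0 /\ vdot (N s) (B s) = 0 /\
    B s = vcross (T s) (N s) /\
    0 < k s.

Definition is_helix (a b : Rbar) (T : R -> V3) : Prop :=
  exists d : V3, vnorm d = 1 /\ exists c0 : R,
    forall s, in_open a b s -> vdot (T s) d = c0.

Definition is_slant_helix (a b : Rbar) (N : R -> V3) : Prop :=
  exists d : V3, vnorm d = 1 /\ exists c0 : R,
    forall s, in_open a b s -> vdot (N s) d = c0.

Definition is_spherical_helix (a b : Rbar) (c T : R -> V3) : Prop :=
  is_helix a b T /\
  exists (p : V3) (r : R), 0 < r /\ forall s, in_open a b s -> vnorm (vsub (c s) p) = r.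

Definition is_part_of_circle (a b : Rbar) (c : R -> V3) : Prop :=
  exists (p n : V3) (r : R), 0 < r /\ vnorm n = 1 /\
    forall s, in_open a b s ->
      vnorm (vsub (c s) p) = r /\ vdot (vsub (c s) p) n = 0.

(* Along beta one has X' = kappa_beta N_beta = kappa_beta T_T with kappa_beta > 0,
   so X.d is constant for a fixed unit vector d iff T_T is orthogonal to d, i.e.
   iff alpha_T lies in a plane normal to d. As alpha_T lies on the unit sphere, such
   a plane section is a circle. For (ii), N_beta = T_T turns "beta is a slant helix"
   into "alpha_T is a helix", and alpha_T is spherical anyway. *)
From Stdlib Require Import Reals Lra Psatz Classical.
From Coquelicot Require Import Coquelicot.
Open Scope R_scope.

Lemma vdot_scale_l k v w : vdot (vscale k v) w = k * vdot v w.
Proof. unfold vdot, vscale, vx, vy, vz; simpl; ring. Qed.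

Lemma vdot_sub_l u v w : vdot (vsub u v) w = vdot u w - vdot v w.
Proof. unfold vdot, vsub, vx, vy, vz; simpl; ring. Qed.

Lemma vdot_sub_scale_self v k d :
  vdot (vsub v (vscale k d)) (vsub v (vscale k d)) =
  vdot v v - 2 * k * vdot v d + k * k * vdot d d.
Proof. unfold vdot, vsub, vscale, vx, vy, vz; simpl; ring. Qed.

Lemma vdot_self_ge0 v : 0 <= vdot v v.
Proof. unfold vdot; nra. Qed.

Lemma vnorm_eq1 v : vnorm v = 1 -> vdot v v = 1.
Proof.
  unfold vnorm; intros Hv.
  rewrite <- (sqrt_sqrt _ (vdot_self_ge0 v)), Hv; ring.
Qed.

Lemma vnorm_e1 : vnorm (1, 0, 0) = 1.
Proof.
  unfold vnorm, vdot, vx, vy, vz; simpl.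
  replace (1 * 1 + 0 * 0 + 0 * 0) with 1 by ring; apply sqrt_1.
Qed.

Lemma vsub_eq_of_vdot_le0 u v : vdot (vsub u v) (vsub u v) <= 0 -> u = v.
Proof.
  destruct u as [[u1 u2] u3], v as [[v1 v2] v3].
  unfold vdot, vsub, vx, vy, vz; simpl; intros H.
  pose proof (Rle_0_sqr (u1 - v1)); pose proof (Rle_0_sqr (u2 - v2));
    pose proof (Rle_0_sqr (u3 - v3)); unfold Rsqr in *.
  f_equal; [f_equal|]; apply Rminus_diag_uniq, Rsqr_0_uniq; unfold Rsqr; lra.
Qed.

Lemma is_derive_vdot_r (f f' : R -> V3) d t :
  vderiv f f' t -> is_derive (fun s => vdot (f s) d) t (vdot (f' t) d).
Proof.
  intros (Hx & Hy & Hz); unfold vdot.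
  assert (Hmul : forall g l c, is_derive g t l -> is_derive (fun s => g s * c) t (l * c)).
  { intros g l c Hg; rewrite Rmult_comm.
    apply (is_derive_ext (fun s => c * g s)); [intros; apply Rmult_comm|].
    now apply is_derive_scal. }
  assert (Hadd : forall g h l m, is_derive g t l -> is_derive h t m ->
                  is_derive (fun s => g s + h s) t (l + m)).
  { intros g h l m; exact (is_derive_plus g h t l m). }
  repeat apply Hadd; apply Hmul; assumption.
Qed.

Lemma in_open_locally a b u : in_open a b u -> locally u (in_open a b).
Proof.
  intros [Hau Hub].
  pose proof (open_Rbar_gt' (Finite u) a Hau) as Ha.
  pose proof (open_Rbar_lt' (Finite u) b Hub) as Hb.
  generalize (filter_and _ _ Ha Hb); apply filter_imp.
  intros v [Hav Hvb]; split; assumption.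
Qed.

Lemma in_open_between a b u v w :
  in_open a b u -> in_open a b v -> Rmin u v <= w <= Rmax u v -> in_open a b w.
Proof.
  intros [Hau Hub] [Hav Hvb] [Hmin Hmax]; split.
  - destruct a as [a| |]; simpl in *; try contradiction; [|exact I].
    apply Rlt_le_trans with (Rmin u v); [apply Rmin_glb_lt|]; assumption.
  - destruct b as [b| |]; simpl in *; try contradiction; [|exact I].
    apply Rle_lt_trans with (Rmax u v); [|apply Rmax_lub_lt]; assumption.
Qed.

Lemma is_derive_locally_const a b (g : R -> R) c u l :
  (forall v, in_open a b v -> g v = c) -> in_open a b u -> is_derive g u l -> l = 0.
Proof.
  intros Hc Hu Hd.
  rewrite <- (is_derive_unique _ _ _ Hd), (Derive_ext_loc g (fun _ => c)).
  - apply Derive_const.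
  - generalize (in_open_locally a b u Hu); apply filter_imp; exact Hc.
Qed.

Lemma derive0_const_on a b (g : R -> R) :
  (forall u, in_open a b u -> is_derive g u 0) ->
  exists c, forall u, in_open a b u -> g u = c.
Proof.
  intros Hd.
  destruct (classic (exists u0, in_open a b u0)) as [[u0 Hu0] | Hempty].
  - exists (g u0); intros u Hu.
    assert (Hseg : forall w, Rmin u0 u <= w <= Rmax u0 u -> derivable_pt_lim g w 0).
    { intros w Hw; apply is_derive_Reals, Hd, (in_open_between a b u0 u w); assumption. }
    destruct (MVT_abs g (fun _ => 0) u0 u Hseg) as [w [Hw _]].
    rewrite Rabs_R0, Rmult_0_l in Hw; apply Rabs_eq_0 in Hw; lra.
  - exists 0; intros u Hu; exfalso; eauto.
Qed.

Lemma vdot_const_iff_orth a b (f f' : R -> V3) d :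
  (forall u, in_open a b u -> vderiv f f' u) ->
  (exists c, forall u, in_open a b u -> vdot (f u) d = c) <->
  (forall u, in_open a b u -> vdot (f' u) d = 0).
Proof.
  intros Hf; split.
  - intros [c Hc] u Hu.
    exact (is_derive_locally_const a b _ c u _ Hc Hu (is_derive_vdot_r f f' d u (Hf u Hu))).
  - intros Horth; apply derive0_const_on; intros u Hu.
    rewrite <- (Horth u Hu); exact (is_derive_vdot_r f f' d u (Hf u Hu)).
Qed.

Definition in_fixed_plane (a b : Rbar) (F : R -> V3) : Prop :=
  exists n : V3, vnorm n = 1 /\ forall u, in_open a b u -> vdot (F u) n = 0.

Lemma in_fixed_plane_ext a b F G :
  (forall u, in_open a b u -> F u = G u) -> in_fixed_plane a b F <-> in_fixed_plane a b G.
Proof.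
  intros HFG; split; intros (n & Hn & H); exists n; split; try exact Hn;
    intros u Hu; [rewrite <- HFG | rewrite HFG]; auto.
Qed.

Lemma is_helix_ext a b F G :
  (forall u, in_open a b u -> F u = G u) -> is_helix a b F <-> is_helix a b G.
Proof.
  intros HFG; split; intros (d & Hd & c & H); exists d; split; try exact Hd;
    exists c; intros u Hu; [rewrite <- HFG | rewrite HFG]; auto.
Qed.

Section FrenetCurve.

Context {a b : Rbar} {c T N B : R -> V3} {k t : R -> R}.
Hypothesis Hc : frenet_curve a b c T N B k t.

Lemma frenet_curve_nonconstant p :
  (forall v, in_open a b v -> c v = p) -> forall u, ~ in_open a b u.
Proof.
  intros Hp u Hu.
  destruct (Hc u Hu) as (Hder & _ & _ & _ & HTT & _).
  assert (Hconst : forall v, in_open a b v -> vdot (c v) (T u) = vdot p (T u))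
    by (intros v Hv; rewrite Hp by exact Hv; reflexivity).
  pose proof (is_derive_locally_const a b _ _ u _ Hconst Hu (is_derive_vdot_r c T (T u) u Hder)).
  lra.
Qed.

Lemma tangent_const_angle_iff_normal_orth d :
  (exists c0, forall u, in_open a b u -> vdot (T u) d = c0) <->
  (forall u, in_open a b u -> vdot (N u) d = 0).
Proof.
  rewrite (vdot_const_iff_orth a b T (fun u => vscale (k u) (N u)) d)
    by (intros u Hu; apply (Hc u Hu)).
  split; intros H u Hu; specialize (H u Hu); rewrite vdot_scale_l in *.
  - destruct (Hc u Hu) as (_ & _ & _ & _ & _ & _ & _ & _ & _ & _ & _ & Hk).
    destruct (Rmult_integral _ _ H); [lra | assumption].
  - rewrite H; ring.
Qed.

Lemma is_helix_iff_in_fixed_plane_normal : is_helix a b T <-> in_fixed_plane a b N.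
Proof.
  split; intros (d & Hd & H); exists d; split; try exact Hd;
    apply tangent_const_angle_iff_normal_orth; assumption.
Qed.

Hypothesis Hsphere : forall u, in_open a b u -> vdot (c u) (c u) = 1.

Lemma unit_sphere_plane_section_circle n c0 :
  vnorm n = 1 -> (forall u, in_open a b u -> vdot (c u) n = c0) -> is_part_of_circle a b c.
Proof.
  intros Hn Hc0; pose proof (vnorm_eq1 n Hn) as Hnn.
  assert (Hrad : forall u, in_open a b u ->
            vdot (vsub (c u) (vscale c0 n)) (vsub (c u) (vscale c0 n)) = 1 - c0 * c0).
  { intros u Hu; rewrite vdot_sub_scale_self, Hsphere, Hc0, Hnn by exact Hu; ring. }
  destruct (Rlt_dec 0 (1 - c0 * c0)) as [Hpos | Hdeg].
  - exists (vscale c0 n), n, (sqrt (1 - c0 * c0)).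
    split; [now apply sqrt_lt_R0|]; split; [exact Hn|].
    intros u Hu; split.
    + unfold vnorm; rewrite Hrad by exact Hu; reflexivity.
    + rewrite vdot_sub_l, vdot_scale_l, Hc0, Hnn by exact Hu; ring.
  - (* A plane at distance >= 1 meets the unit sphere in at most one point, and a
       Frenet curve cannot stay at a point: the interval is empty. *)
    exists (1, 0, 0), (1, 0, 0), 1; split; [lra|]; split; [exact vnorm_e1|].
    intros u Hu; exfalso.
    apply (frenet_curve_nonconstant (vscale c0 n)) with u; [|exact Hu].
    intros v Hv; apply vsub_eq_of_vdot_le0; rewrite Hrad by exact Hv; lra.
Qed.

Lemma is_part_of_circle_iff_in_fixed_plane : is_part_of_circle a b c <-> in_fixed_plane a b T.
Proof.
  assert (Hder : forall u, in_open a b u -> vderiv c T u) by (intros u Hu; apply (Hc u Hu)).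
  split.
  - intros (p & n & r & _ & Hn & Hcirc); exists n; split; [exact Hn|].
    apply (vdot_const_iff_orth a b c T n Hder); exists (vdot p n); intros u Hu.
    destruct (Hcirc u Hu) as [_ Hplane]; rewrite vdot_sub_l in Hplane; lra.
  - intros (n & Hn & Horth).
    destruct (proj2 (vdot_const_iff_orth a b c T n Hder) Horth) as [c0 Hc0].
    exact (unit_sphere_plane_section_circle n c0 Hn Hc0).
Qed.

Lemma is_spherical_helix_iff_is_helix : is_spherical_helix a b c T <-> is_helix a b T.
Proof.
  split; [now intros [H _]|]; intros H; split; [exact H|].
  exists (0, 0, 0), 1; split; [lra|]; intros u Hu; unfold vnorm.
  replace (vdot (vsub (c u) (0, 0, 0)) (vsub (c u) (0, 0, 0))) with (vdot (c u) (c u))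
    by (unfold vdot, vsub, vx, vy, vz; simpl; ring).
  rewrite Hsphere by exact Hu; apply sqrt_1.
Qed.

End FrenetCurve.

Lemma tangent_indicatrix_on_unit_sphere a b aT bT (alpha T N B : R -> V3) (kappa tau : R -> R)
    (sigma : R -> R) (alphaT : R -> V3) :
  frenet_curve a b alpha T N B kappa tau ->
  (forall u, in_open aT bT u -> exists s, in_open a b s /\ sigma s = u) ->
  (forall s, in_open a b s -> alphaT (sigma s) = T s) ->
  forall u, in_open aT bT u -> vdot (alphaT u) (alphaT u) = 1.
Proof.
  intros Halpha Honto Hdef u Hu.
  destruct (Honto u Hu) as [s [Hs <-]]; rewrite (Hdef s Hs).
  apply (Halpha s Hs).
Qed.

Theorem theorem4p5
  (* the curve alpha on I = (a,b), with its Frenet apparatus *)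
  (a b : Rbar) (alpha T N B : R -> V3) (kappa tau : R -> R)
  (Halpha : frenet_curve a b alpha T N B kappa tau)
  (* arc length s_T = sigma(s) of the tangent indicatrix, sigma' = kappa,
     mapping I onto J = (aT,bT) *)
  (sigma : R -> R) (aT bT : Rbar)
  (Hsigma_der : forall s, in_open a b s -> is_derive sigma s (kappa s))
  (Hsigma_in : forall s, in_open a b s -> in_open aT bT (sigma s))
  (Hsigma_onto : forall u, in_open aT bT u -> exists s, in_open a b s /\ sigma s = u)
  (* the tangent indicatrix alpha_T, parametrized by s_T, with its Frenet apparatus *)
  (alphaT TT NT BT : R -> V3) (kappaT tauT : R -> R)
  (HalphaT_def : forall s, in_open a b s -> alphaT (sigma s) = T s)
  (HalphaT : frenet_curve aT bT alphaT TT NT BT kappaT tauT)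
  (* the X-direction curve beta, X = x T_T + y N_T + z B_T *)
  (x y z : R -> R)
  (Hxyz : forall u, in_open aT bT u -> x u ^ 2 + y u ^ 2 + z u ^ 2 = 1)
  (beta Nbeta Bbeta : R -> V3) (kappabeta taubeta : R -> R)
  (Hbeta : frenet_curve aT bT beta
             (fun u => vadd (vscale (x u) (TT u))
                         (vadd (vscale (y u) (NT u)) (vscale (z u) (BT u))))
             Nbeta Bbeta kappabeta taubeta)
  (* evolute-direction curve: N_beta = T_T *)
  (Hevol : forall u, in_open aT bT u -> Nbeta u = TT u) :
  (is_part_of_circle aT bT alphaT <->
     is_helix aT bT (fun u => vadd (vscale (x u) (TT u))
                         (vadd (vscale (y u) (NT u)) (vscale (z u) (BT u))))) /\
  (is_spherical_helix aT bT alphaT TT <-> is_slant_helix aT bT Nbeta).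
Proof.
  pose proof (tangent_indicatrix_on_unit_sphere a b aT bT alpha T N B kappa tau sigma alphaT
                Halpha Hsigma_onto HalphaT_def) as Hsphere.
  split.
  - rewrite (is_part_of_circle_iff_in_fixed_plane HalphaT Hsphere),
            (is_helix_iff_in_fixed_plane_normal Hbeta).
    apply in_fixed_plane_ext; intros u Hu; symmetry; auto.
  - rewrite (is_spherical_helix_iff_is_helix Hsphere).
    apply is_helix_ext; intros u Hu; symmetry; auto.
Qed.
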